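(* Let $\mathcal{A},\mathcal{B}\subseteq\mathcal{S}$ be finite sets of permutations and let $$A=\{\vec v\in[0,1]^{\mathcal A}\mid\exists(\sigma^m)\in\mathcal{S}^{\mathbb N}:|\sigma^m|\to\infty,\ (\widetilde{\mathrm{c\text{-}occ}}(\pi,\sigma^m))_{\pi\in\mathcal A}\to\vec v\},$$ $$B=\{\vec v\in[0,1]^{\mathcal B}\mid\exists(\sigma^m)\in\mathcal{S}^{\mathbb N}:|\sigma^m|\to\infty,\ (\widetilde{\mathrm{occ}}(\pi,\sigma^m))_{\pi\in\mathcal B}\to\vec v\},$$ $$C=\{\vec v\in[0,1]^{\mathcal A\sqcup\mathcal B}\mid\exists(\sigma^m)\in\mathcal{S}^{\mathbb N}:|\sigma^m|\to\infty,\ (\widetilde{\mathrm{c\text{-}occ}}(\pi,\sigma^m))_{\pi\in\mathcal A}\to\vec v_{\mathcal A},\ (\widetilde{\mathrm{occ}}(\pi,\sigma^m))_{\pi\in\mathcal B}\to\vec v_{\mathcal B}\}.$$ Then $A\times B=C$. More precisely, if $\vec v_A\in A$, $\vec v_B\in B$ and $(\sigma^m_A)_m$, $(\sigma^m_B)_m$ are sequences of permutations with $|\sigma^m_A|\to\infty$, $(\widetilde{\mathrm{c\text{-}occ}}(\pi,\sigma^m_A))_{\pi\in\mathcal A}\to\vec v_A$, $|\sigma^m_B|\to\infty$, $(\widetilde{\mathrm{occ}}(\pi,\sigma^m_B))_{\pi\in\mathcal B}\to\vec v_B$, then the sequence $\sigma^m_C:=\sigma^m_B[\sigma^m_A,\dots,\sigma^m_A]$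 satisfies $|\sigma^m_C|\to\infty$, $(\widetilde{\mathrm{c\text{-}occ}}(\pi,\sigma^m_C))_{\pi\in\mathcal A}\to\vec v_A$ and $(\widetilde{\mathrm{occ}}(\pi,\sigma^m_C))_{\pi\in\mathcal B}\to\vec v_B$.
   Context: $\mathcal{S}_n$ is the set of permutations of $[n]$, $\mathcal{S}$ the set of all finite permutations. For $\sigma\in\mathcal{S}_n$ and $I\subseteq[n]$, $\mathrm{pat}_I(\sigma)$ is the unique permutation of $[|I|]$ order-isomorphic to $(\sigma(i))_{i\in I}$. For $\pi\in\mathcal{S}_k$ and $\sigma\in\mathcal{S}_n$ ($n\ge k$): $\mathrm{occ}(\pi,\sigma)$ is the number of subsets $I\subseteq[n]$ with $\mathrm{pat}_I(\sigma)=\pi$ and $\widetilde{\mathrm{occ}}(\pi,\sigma)=\mathrm{occ}(\pi,\sigma)/\binom nk$; $\mathrm{c\text{-}occ}(\pi,\sigma)$ is the number of intervals $I\subseteq[n]$ with $\mathrm{pat}_I(\sigma)=\pi$ and $\widetilde{\mathrm{c\text{-}occ}}(\pi,\sigma)=\mathrm{c\text{-}occ}(\pi,\sigma)/n$ (these are taken to be $0$ when $n<k$). For $\theta\in\mathcal{S}_d$ and permutations $\nu^{(1)},\dots,\nu^{(d)}$, the substitution $\theta[\nu^{(1)},\dots,\nu^{(d)}]$ is the permutation of size $\sum_i|\nu^{(i)}|$ obtained by replacing, in the diagram of $\theta$ (points $(i,\theta(i))$), each point $(i,\theta(i))$ by the diagram of $\nu^{(i)}$ and rescaling rows and columns; i.e.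 its entries split into consecutive blocks of sizes $|\nu^{(1)}|,\dots,|\nu^{(d)}|$, the $i$-th block is order-isomorphic to $\nu^{(i)}$, and every entry of block $i$ is smaller than every entry of block $j$ iff $\theta(i)<\theta(j)$. *)

From Stdlib Require Import Reals.
From mathcomp Require Import all_boot.

Set Implicit Arguments.
Unset Strict Implicit.
Unset Printing Implicit Defensive.

(* A permutation of [n] is represented 0-based as the sequence of its values
   (sigma(1)-1, ..., sigma(n)-1): a sequence that is a rearrangement of
   0, ..., n-1.  Its size |sigma| is [size s]. *)
Definition is_perm (s : seq nat) : bool := perm_eq s (iota 0 (size s)).

Definition order_iso (s t : seq nat) : bool :=
  (size s == size t) &&
  all (fun a => all (fun b =>
         (nth 0 s a < nth 0 s b) == (nth 0 t a < nth 0 t b))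
       (iota 0 (size s))) (iota 0 (size s)).

Definition occ (pi sigma : seq nat) : nat :=
  #|[set I : {set 'I_(size sigma)} |
       order_iso (mask [seq i \in I | i <- enum 'I_(size sigma)] sigma) pi]|.

Definition cocc (pi sigma : seq nat) : nat :=
  if size sigma < size pi then 0
  else count (fun i => order_iso (take (size pi) (drop i sigma)) pi)
             (iota 0 (size sigma - size pi).+1).

Definition occ_t (pi sigma : seq nat) : R :=
  if size sigma < size pi then R0
  else Rdiv (INR (occ pi sigma)) (INR 'C(size sigma, size pi)).

Definition cocc_t (pi sigma : seq nat) : R :=
  if size sigma < size pi then R0
  else Rdiv (INR (cocc pi sigma)) (INR (size sigma)).

(* Substitution theta[nu_1, ..., nu_d]: block i (0-based) is nu_i shifted by
   the total size of the blocks j with theta(j) < theta(i). *)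
Definition subst_offset (theta : seq nat) (nus : seq (seq nat)) (i : nat) : nat :=
  sumn [seq size (nth [::] nus j) | j <- iota 0 (size theta)
          & nth 0 theta j < nth 0 theta i].

Definition subst (theta : seq nat) (nus : seq (seq nat)) : seq nat :=
  flatten [seq [seq subst_offset theta nus i + x | x <- nth [::] nus i]
          | i <- iota 0 (size theta)].

Definition subst_const (theta nu : seq nat) : seq nat :=
  subst theta (nseq (size theta) nu).

Definition size_to_infty (sigma : nat -> seq nat) : Prop :=
  forall M : nat, exists N : nat, forall m : nat, (N <= m)%coq_nat -> M <= size (sigma m).

Definition perm_seq (sigma : nat -> seq nat) : Prop := forall m, is_perm (sigma m).

(* A vector of [0,1]^P is represented by a function v : seq nat -> R,
   only its values on the elements of P being relevant. *)
Definition in_unit_cube (P : seq (seq nat)) (v : seq nat -> R) : Prop :=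
  forall pi, pi \in P -> Rle R0 (v pi) /\ Rle (v pi) R1.

Definition cocc_cv (P : seq (seq nat)) (sigma : nat -> seq nat) (v : seq nat -> R) : Prop :=
  forall pi, pi \in P -> Un_cv (fun m => cocc_t pi (sigma m)) (v pi).

Definition occ_cv (P : seq (seq nat)) (sigma : nat -> seq nat) (v : seq nat -> R) : Prop :=
  forall pi, pi \in P -> Un_cv (fun m => occ_t pi (sigma m)) (v pi).

Definition limsetA (PA : seq (seq nat)) (v : seq nat -> R) : Prop :=
  in_unit_cube PA v /\
  exists sigma, perm_seq sigma /\ size_to_infty sigma /\ cocc_cv PA sigma v.

Definition limsetB (PB : seq (seq nat)) (v : seq nat -> R) : Prop :=
  in_unit_cube PB v /\
  exists sigma, perm_seq sigma /\ size_to_infty sigma /\ occ_cv PB sigma v.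

(* An element of [0,1]^(A ⊔ B) is the pair (v_A, v_B). *)
Definition limsetC (PA PB : seq (seq nat)) (vA vB : seq nat -> R) : Prop :=
  in_unit_cube PA vA /\ in_unit_cube PB vB /\
  exists sigma, perm_seq sigma /\ size_to_infty sigma /\
    cocc_cv PA sigma vA /\ occ_cv PB sigma vB.

From Stdlib Require Import Reals Lra.
From mathcomp Require Import all_boot zify.

(* Let a = |sigma_A|, b = |sigma_B| and tau = sigma_B[sigma_A, ..., sigma_A], so
   that position i*a + r of tau holds sigma_B(i)*a + sigma_A(r).
   A window of tau of length k lying inside one block is a translate of a window of
   sigma_A, and each block has at most k other windows; hence c-occ(pi, tau) is
   b*c-occ(pi, sigma_A) up to b*(k+1), and the consecutive densities differ by at
   most (k+1)/a.
   A k-set of positions of tau meeting each block at most once has the pattern of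
   sigma_B on the blocks it meets, and every k-set of blocks arises from a^k of them.
   These C(b,k)*a^k sets form a proportion at least (1 - k/b)^k >= 1 - k^2/b of all
   k-sets of positions, so the densities of pi in tau and in sigma_B differ by at
   most k^2/b.  Both errors vanish as a and b grow, which gives A x B in C; the
   converse inclusion is immediate. *)

(** * Permutations and substitution *)

Lemma ltn_mulD_lex a u v p q : p < a -> q < a ->
  (u * a + p < v * a + q) = (u < v) || (u == v) && (p < q).
Proof.
move=> pa qa; case: (ltngtP u v) => [uv|vu|->] /=; last by rewrite ltn_add2l.
- have : u * a + a <= v * a by rewrite -mulSnr leq_mul2r uv orbT.
  by move=> uv_a; apply/idP; lia.
- have : v * a + a <= u * a by rewrite -mulSnr leq_mul2r vu orbT.
  by move=> vu_a; apply/negbTE; rewrite -leqNgt; lia.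
Qed.

Lemma eq_mulD_lex a u v p q : p < a -> q < a ->
  (u * a + p == v * a + q) = (u == v) && (p == q).
Proof.
move=> pa qa; have a_gt0 : 0 < a by apply: leq_ltn_trans pa.
apply/eqP/andP => [E|[/eqP-> /eqP->]] //; split; apply/eqP.
- by have := congr1 (divn^~ a) E; rewrite /= !divnMDl // !divn_small // !addn0.
- by have := congr1 (modn^~ a) E; rewrite /= !modnMDl !modn_small.
Qed.

Lemma nth_flatten_blocks (T : Type) (x0 : T) (ss : seq (seq T)) a i r :
  shape ss = nseq (size ss) a -> i < size ss -> r < a ->
  nth x0 (flatten ss) (i * a + r) = nth x0 (nth [::] ss i) r.
Proof.
move=> sh i_lt r_lt.
have r_lt' : r < nth 0 (shape ss) i by rewrite sh nth_nseq i_lt.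
have -> : i * a + r = flatten_index (shape ss) i r.
  by rewrite /flatten_index sh take_nseq ?sumn_nseq 1?mulnC // ltnW.
by rewrite nth_flatten flatten_indexKl // flatten_indexKr.
Qed.

Lemma map_constE {T U : Type} (c : U) (s : seq T) : [seq c | _ <- s] = nseq (size s) c.
Proof. by elim: s => //= x s ->. Qed.

Lemma count_iota_ltn v n : v <= n -> count (fun i => i < v) (iota 0 n) = v.
Proof. by move=> vn; rewrite -size_filter (filter_iota_ltn 0) ?size_iota. Qed.

Lemma sub_in_count {T : eqType} (a1 a2 : pred T) (s : seq T) :
  {in s, subpred a1 a2} -> count a1 s <= count a2 s.
Proof.
elim: s => //= x s IH s12; apply: leq_add.
  by case a1x: (a1 x); rewrite // (s12 x) // mem_head.
by apply: IH => y ys; apply: s12; rewrite inE ys orbT.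
Qed.

Lemma count_predU_le {T : Type} (a1 a2 : pred T) (s : seq T) :
  count (predU a1 a2) s <= count a1 s + count a2 s.
Proof. by rewrite -count_predUI leq_addr. Qed.

Lemma count_iota_tail_le n k : count (fun r => n < r + k) (iota 0 n) <= k.
Proof.
rewrite -(subnKC (leq_subr k n)) iotaD count_cat.
rewrite (eq_in_count (a2 := pred0)) ?count_pred0 => [|r]; last by rewrite mem_iota /=; lia.
by rewrite add0n (leq_trans (count_size _ _)) // size_iota; lia.
Qed.

Lemma is_permP s : uniq s -> {in s, forall x, x < size s} -> is_perm s.
Proof.
move=> s_uniq s_lt; apply: uniq_perm => //; first exact: iota_uniq.
have s_sub : {subset s <= iota 0 (size s)} by move=> x /s_lt; rewrite mem_iota.
by apply: (uniq_min_size s_uniq s_sub _).2; rewrite size_iota.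
Qed.

Lemma is_perm_uniq s : is_perm s -> uniq s.
Proof. by move=> ps; rewrite (perm_uniq ps) iota_uniq. Qed.

Lemma nth_perm_lt s i : is_perm s -> i < size s -> nth 0 s i < size s.
Proof. by move=> ps i_lt; move: (mem_nth 0 i_lt); rewrite (perm_mem ps) mem_iota. Qed.

Lemma count_nth_ltn s i : is_perm s -> i < size s ->
  count (fun j => nth 0 s j < nth 0 s i) (iota 0 (size s)) = nth 0 s i.
Proof.
move=> ps i_lt.
rewrite -(count_map (nth 0 s) (fun x => x < nth 0 s i)) -/(mkseq _ _) mkseq_nth.
by rewrite (permP ps) count_iota_ltn // ltnW // nth_perm_lt.
Qed.

Lemma size_subst_const A B : size (subst_const B A) = size B * size A.
Proof.
rewrite /subst_const /subst size_flatten /shape -map_comp mulnC -sumn_nseq.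
have := map_constE (size A) (iota 0 (size B)); rewrite size_iota => <-.
congr sumn; apply/eq_in_map => i; rewrite mem_iota /= size_map nth_nseq.
by move=> ->.
Qed.

Section SubstConst.
Variables A B : seq nat.
Hypothesis permB : is_perm B.
Let a := size A.
Let b := size B.

Let blocks := [seq [seq nth 0 B i * a + x | x <- A] | i <- iota 0 b].

Lemma subst_constE : subst_const B A = flatten blocks.
Proof.
rewrite /subst_const /subst; congr flatten; apply/eq_in_map => i.
rewrite mem_iota add0n /= => i_lt; rewrite nth_nseq i_lt /subst_offset.
congr (map (addn _)); rewrite -/b.
have -> : [seq size (nth [::] (nseq b A) j) | j <- iota 0 b & nth 0 B j < nth 0 B i]
          = nseq (count (fun j => nth 0 B j < nth 0 B i) (iota 0 b)) a.
  rewrite -size_filter -map_constE; apply/eq_in_map => j.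
  by rewrite mem_filter mem_iota add0n => /andP[_ /= j_lt]; rewrite nth_nseq j_lt.
by rewrite sumn_nseq count_nth_ltn // mulnC.
Qed.

Lemma shape_blocks : shape blocks = nseq (size blocks) a.
Proof.
rewrite /shape -map_comp size_map -map_constE; apply: eq_map => i.
by rewrite /= size_map.
Qed.

Lemma nth_subst_const i r : i < b -> r < a ->
  nth 0 (subst_const B A) (i * a + r) = nth 0 B i * a + nth 0 A r.
Proof.
move=> i_lt r_lt; rewrite subst_constE nth_flatten_blocks ?shape_blocks //.
  by rewrite (nth_map 0) ?size_iota // nth_iota // (nth_map 0).
by rewrite size_map size_iota.
Qed.

Lemma nth_subst_const_divmod t : 0 < a -> t < b * a ->
  nth 0 (subst_const B A) t = nth 0 B (t %/ a) * a + nth 0 A (t %% a).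
Proof.
move=> a_gt0 t_lt; rewrite {1}(divn_eq t a) nth_subst_const ?ltn_pmod //.
by rewrite ltn_divLR.
Qed.

Lemma is_perm_subst_const : is_perm A -> is_perm (subst_const B A).
Proof.
move=> permA; case: (posnP a) => [a0|a_gt0].
  have /size0nil -> : size (subst_const B A) = 0 by rewrite size_subst_const -/a a0 muln0.
  by [].
have nthA_lt t : nth 0 A (t %% a) < a by rewrite nth_perm_lt ?ltn_pmod.
have nthB_lt t : t < b * a -> nth 0 B (t %/ a) < b.
  by move=> t_lt; rewrite nth_perm_lt // ltn_divLR.
apply: is_permP.
  apply/(uniqP 0) => t t'; rewrite !inE size_subst_const => t_lt t'_lt.
  rewrite !nth_subst_const_divmod // => /eqP; rewrite eq_mulD_lex //.
  rewrite !nth_uniq ?ltn_divLR ?ltn_pmod ?is_perm_uniq //.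
  by case/andP => /eqP dE /eqP mE; rewrite (divn_eq t a) (divn_eq t' a) dE mE.
move=> x /(nthP 0)[t]; rewrite size_subst_const => t_lt <-.
by rewrite nth_subst_const_divmod // -[b * a]addn0 ltn_mulD_lex // nthB_lt.
Qed.

End SubstConst.

(** * Consecutive occurrences *)

Definition window k t (s : seq nat) := take k (drop t s).

Lemma size_window k t s : size (window k t s) = minn k (size s - t).
Proof. by rewrite /window size_take size_drop. Qed.

Lemma order_iso_size s pi : order_iso s pi -> size s = size pi.
Proof. by case/andP => /eqP. Qed.

Lemma order_iso_window_short s t pi : t <= size s < t + size pi ->
  order_iso (window (size pi) t s) pi = false.
Proof.
case/andP=> t_le short; apply/negP => /order_iso_size.
by rewrite size_window /minn; case: ltnP; lia.
Qed.

Lemma order_iso_eq s s' pi : size s = size s' ->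
  (forall p q, p < size s -> q < size s ->
     (nth 0 s p < nth 0 s q) = (nth 0 s' p < nth 0 s' q)) ->
  order_iso s pi = order_iso s' pi.
Proof.
move=> ss' cmp; rewrite /order_iso ss'; congr andb.
apply: eq_in_all => p; rewrite mem_iota add0n => p_lt.
by apply: eq_in_all => q; rewrite mem_iota add0n => q_lt; rewrite cmp ?ss'.
Qed.

Lemma order_iso_map_addn c s pi : order_iso (map (addn c) s) pi = order_iso s pi.
Proof.
apply: order_iso_eq; rewrite ?size_map // => p q p_lt q_lt.
by rewrite !(nth_map 0) // ltn_add2l.
Qed.

(* The range of start positions no longer depends on pi: the extra positions carry
   windows shorter than pi. *)
Lemma cocc_count pi s :
  cocc pi s = count (fun t => order_iso (window (size pi) t s) pi) (iota 0 (size s).+1).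
Proof.
rewrite /cocc; set P := fun t => _; case: ltnP => [short|long].
  apply/esym/eqP; rewrite -leqn0 leqNgt -has_count; apply/hasPn => t.
  by rewrite mem_iota => t_lt; rewrite /P order_iso_window_short //; lia.
rewrite -[(size s).+1](subnKC (_ : (size s - size pi).+1 <= (size s).+1)) ?ltnS ?leq_subr //.
rewrite iotaD count_cat -[LHS]addn0; congr (_ + _).
apply/esym/eqP; rewrite -leqn0 leqNgt -has_count; apply/hasPn => t.
by rewrite mem_iota => t_in; rewrite /P order_iso_window_short //; lia.
Qed.

Section CoccSubstConst.
Variables A B pi : seq nat.
Hypothesis permB : is_perm B.
Let a := size A.
Let b := size B.
Let k := size pi.
Let C := subst_const B A.
Let inA t := order_iso (window k t A) pi.
Let inC t := order_iso (window k t C) pi.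

Lemma window_subst_const i r : i < b -> r + k <= a ->
  window k (i * a + r) C = map (addn (nth 0 B i * a)) (window k r A).
Proof.
move=> i_lt rk_le.
have ia_le : i * a + a <= b * a by rewrite -mulSnr leq_mul2r i_lt orbT.
have size_wC : size (window k (i * a + r) C) = k.
  by rewrite size_window /C size_subst_const /minn; case: ltnP; lia.
apply: (@eq_from_nth nat 0) => [|p].
  by rewrite size_wC size_map size_window /minn; case: ltnP; lia.
rewrite size_wC => p_lt_k.
rewrite (nth_map 0) ?size_window -/a ?leq_min ?p_lt_k /=; last by lia.
rewrite /window !nth_take // !nth_drop -addnA nth_subst_const //; lia.
Qed.

Lemma inC_block i r : i < b -> r + k <= a -> inC (i * a + r) = inA r.
Proof. by move=> i_lt rk_le; rewrite /inC window_subst_const // order_iso_map_addn. Qed.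

Lemma count_inC_block i : i < b ->
  count inA (iota 0 a) <= count inC (iota (i * a) a) <= count inA (iota 0 a) + k.
Proof.
move=> i_lt; rewrite -[i * a]addn0 iotaDl count_map; apply/andP; split.
  apply: sub_in_count => r; rewrite mem_iota /= => r_lt inAr.
  case: (leqP (r + k) a) => [rk_le|rk_gt]; first by rewrite /= inC_block.
  by move: inAr; rewrite /inA order_iso_window_short //; lia.
apply: (@leq_trans (count (predU inA (fun r => a < r + k)) (iota 0 a))).
  apply: sub_in_count => r; rewrite mem_iota /= => r_lt inCr; apply/orP.
  case: (leqP (r + k) a) => [rk_le|]; last by right.
  by left; move: inCr; rewrite /= inC_block.
by rewrite (leq_trans (count_predU_le _ _ _)) // leq_add2l count_iota_tail_le.
Qed.

Lemma count_inC_blocks j : j <= b ->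
  j * count inA (iota 0 a) <= count inC (iota 0 (j * a)) <= j * (count inA (iota 0 a) + k).
Proof.
elim: j => [|j IH] j_lt; first by rewrite !mul0n.
have /andP[lo hi] := IH (ltnW j_lt).
have /andP[lo' hi'] := @count_inC_block j j_lt.
rewrite (mulSnr j a) iotaD count_cat add0n !mulSnr.
by apply/andP; split; apply: leq_add.
Qed.

Lemma cocc_subst_const_bounds : 0 < b ->
  cocc pi C <= b * (cocc pi A + k) /\ b * cocc pi A <= cocc pi C + b.
Proof.
move=> b_gt0; rewrite !cocc_count -/k /C size_subst_const -/C -/a -/b.
rewrite -[a.+1]addn1 -[(b * a).+1]addn1 !iotaD !count_cat /= !add0n !addn0.
have -> : window k (b * a) C = window k a A.
  by rewrite /window !drop_oversize ?size_subst_const.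
have /andP[] := @count_inC_blocks b (leqnn b); rewrite /inA /inC.
move: (count _ (iota 0 a)) (count _ (iota 0 (b * a))) => cA cC.
by case: (order_iso _ pi); rewrite !mulnDr ?muln0 ?muln1; lia.
Qed.

End CoccSubstConst.

(** * Occurrences *)

Definition mask_set {n} (I : {set 'I_n}) (s : seq nat) :=
  mask [seq i \in I | i <- enum 'I_n] s.

Lemma occE n pi s : size s = n ->
  occ pi s = #|[set I : {set 'I_n} | order_iso (mask_set I s) pi]|.
Proof. by move=> <-. Qed.

Lemma mask_setE n (I : {set 'I_n}) s : size s = n ->
  mask_set I s = [seq nth 0 s i | i : 'I_n <- enum I].
Proof.
move=> size_s.
have {1}-> : s = [seq nth 0 s i | i : 'I_n <- enum 'I_n].
  by rewrite (map_comp (nth 0 s) val) val_enum_ord -size_s -/(mkseq _ _) mkseq_nth.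
by rewrite /mask_set -map_mask -filter_mask enumT.
Qed.

Lemma size_mask_set n (I : {set 'I_n}) s : size s = n -> size (mask_set I s) = #|I|.
Proof. by move=> size_s; rewrite mask_setE // size_map cardE. Qed.

Lemma sorted_enum_set n (I : {set 'I_n}) : sorted (fun i j : 'I_n => i < j) (enum I).
Proof.
rewrite (_ : enum I = [seq i <- enum 'I_n | i \in I]); last by rewrite enumT.
apply: sorted_filter; first by move=> i j l; apply: ltn_trans.
by have := iota_ltn_sorted 0 n; rewrite -val_enum_ord sorted_map.
Qed.

Lemma order_iso_map (T : eqType) (e : seq T) (F G : T -> nat) pi :
  {in e &, forall x y, (F x < F y) = (G x < G y)} ->
  order_iso (map F e) pi = order_iso (map G e) pi.
Proof.
move=> FG; apply: order_iso_eq; rewrite ?size_map // => p q p_lt q_lt.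
case: e FG p_lt q_lt => [//|x0 e] FG p_lt q_lt.
by rewrite !(nth_map x0) // FG // mem_nth.
Qed.

Lemma occ_le_binomial pi s : occ pi s <= 'C(size s, size pi).
Proof.
rewrite (@occE (size s) pi s erefl) -[X in 'C(X, _)](card_ord (size s)) -card_draws.
apply/subset_leq_card/subsetP => I; rewrite !inE => /order_iso_size.
by rewrite size_mask_set // => ->.
Qed.

Section OccSubstConst.
Variables A B : seq nat.
Hypotheses (permA : is_perm A) (permB : is_perm B).
Let a := size A.
Let b := size B.
Let C := subst_const B A.
Hypothesis a_gt0 : 0 < a.

(* A selector g picks, in each block j, either no position or position j*a + r when
   g j = Some r; its image [sel_set g] ranges over the sets of positions meeting every
   block at most once. *)
Implicit Type g : {ffun 'I_b -> option 'I_a}.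

Definition sel_blocks g : {set 'I_b} := [set j | g j != None].

Definition sel_offset g (j : 'I_b) : nat := if g j is Some r then val r else 0.

Lemma sel_offset_lt g j : sel_offset g j < a.
Proof. by rewrite /sel_offset; case: (g j) => [r|] //; apply: ltn_ord. Qed.

Lemma sel_pos_lt g (j : 'I_b) : j * a + sel_offset g j < b * a.
Proof. by rewrite -[b * a]addn0 ltn_mulD_lex ?sel_offset_lt ?ltn_ord. Qed.

Definition sel_pos g j : 'I_(b * a) := Ordinal (sel_pos_lt g j).

Lemma sel_pos_inj g : injective (sel_pos g).
Proof.
move=> j j' /(congr1 val) /= /eqP; rewrite eq_mulD_lex ?sel_offset_lt //.
by case/andP => /eqP/val_inj.
Qed.

Lemma ltn_sel_pos g (j j' : 'I_b) : (sel_pos g j < sel_pos g j') = (j < j').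
Proof.
rewrite /= ltn_mulD_lex ?sel_offset_lt //.
by case: eqP => [/val_inj ->|_]; rewrite ?ltnn ?orbF.
Qed.

Definition sel_set g : {set 'I_(b * a)} := sel_pos g @: sel_blocks g.

Lemma card_sel_set g : #|sel_set g| = #|sel_blocks g|.
Proof. exact: card_imset (@sel_pos_inj g). Qed.

Lemma sel_set_sub g g' j : sel_set g \subset sel_set g' -> g j != None -> g' j = g j.
Proof.
move=> /subsetP sub gj.
have /sub/imsetP[j' g'j' E] : sel_pos g j \in sel_set g by apply: imset_f; rewrite inE.
have /andP[/eqP/val_inj jj' /eqP off] :
    (j == j' :> nat) && (sel_offset g j == sel_offset g' j').
  by rewrite -(@eq_mulD_lex a) ?sel_offset_lt // -[_ * _ + _]/(val (sel_pos g j)) E.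
subst j'; move: g'j' gj off; rewrite inE /sel_offset.
by case: (g' j) => [r'|] //=; case: (g j) => [r|] //= _ _ /val_inj ->.
Qed.

Lemma sel_set_inj : injective sel_set.
Proof.
move=> g g' E; apply/ffunP => j.
have sub : sel_set g \subset sel_set g' by rewrite E.
have sub' : sel_set g' \subset sel_set g by rewrite E.
have [gj|gj] := eqVneq (g j) None; last by rewrite (sel_set_sub _ _ _ sub).
have [g'j|g'j] := eqVneq (g' j) None; first by rewrite gj g'j.
by rewrite -(sel_set_sub _ _ _ sub').
Qed.

Lemma enum_sel_set g : enum (sel_set g) = map (sel_pos g) (enum (sel_blocks g)).
Proof.
apply: (@irr_sorted_eq _ (fun i j : 'I_(b * a) => i < j)).
- by move=> i j l; apply: ltn_trans.
- by move=> i; rewrite /= ltnn.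
- exact: sorted_enum_set.
- rewrite sorted_map.
  have lt_pos : subrel (fun j j' : 'I_b => j < j')
                       (relpre (sel_pos g) (fun i i' : 'I_(b * a) => i < i')).
    by move=> j j' /=; rewrite ltn_sel_pos.
  by apply: (sub_sorted lt_pos); apply: sorted_enum_set.
- move=> i; rewrite mem_enum; apply/imsetP/mapP => -[j j_in ->];
  by exists j; rewrite // mem_enum in j_in *.
Qed.

Lemma order_iso_sel_set g pi :
  order_iso (mask_set (sel_set g) C) pi = order_iso (mask_set (sel_blocks g) B) pi.
Proof.
rewrite !mask_setE ?size_subst_const // enum_sel_set -map_comp.
apply: order_iso_map => j j' _ _ /=.
rewrite !nth_subst_const ?sel_offset_lt // ltn_mulD_lex ?nth_perm_lt ?sel_offset_lt //.
case: (eqVneq j j') => [->|jj']; first by rewrite eqxx !ltnn.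
rewrite nth_uniq ?is_perm_uniq //.
by rewrite (inj_eq val_inj) (negbTE jj') orbF.
Qed.

Lemma card_sel_blocks_eq J : #|[set g | sel_blocks g == J]| = a ^ #|J|.
Proof.
have card_some : #|[pred o : option 'I_a | o != None]| = a.
  by have := cardC1 (None : option 'I_a); rewrite card_option card_ord.
rewrite -[X in X ^ _]card_some -(card_pffun_on None); apply: eq_card => g.
rewrite inE; apply/eqP/pffun_onP => [<-|[sub im]].
  split; first by apply/subsetP => j; rewrite !inE.
  by move=> o /imageP[j]; rewrite inE => j_in ->.
apply/setP => j; rewrite inE; apply/idP/idP => [gj|j_in]; last exact: im (image_f g j_in).
by apply: (subsetP sub); rewrite inE.
Qed.

Lemma card_sel_blocks (P : pred {set 'I_b}) k : (forall J, P J -> #|J| = k) ->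
  #|[set g | P (sel_blocks g)]| = #|[set J | P J]| * a ^ k.
Proof.
move=> card_P; rewrite -sum1dep_card (partition_big sel_blocks P) //.
rewrite -sum1dep_card big_distrl /=; apply: eq_bigr => J PJ.
rewrite mul1n sum1dep_card -(card_P J PJ) -card_sel_blocks_eq.
by apply: eq_card => g; rewrite !inE; apply/andP/idP => [[]|/eqP E] //; rewrite E.
Qed.

Let sel_sets := [set sel_set g | g : {ffun 'I_b -> option 'I_a}].

Lemma card_sel_sets (P : pred {set 'I_(b * a)}) (Q : pred {set 'I_b}) k :
  (forall g, P (sel_set g) = Q (sel_blocks g)) -> (forall J, Q J -> #|J| = k) ->
  #|[set I | P I] :&: sel_sets| = #|[set J | Q J]| * a ^ k.
Proof.
move=> PQ card_Q; rewrite -(card_sel_blocks _ _ card_Q) -(card_imset _ sel_set_inj).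
apply: eq_card => I; rewrite !inE.
apply/andP/imsetP => [[PI /imsetP[g _ E]]|[g Qg ->]].
  by exists g; rewrite // inE -PQ -E.
by rewrite inE -PQ in Qg; rewrite Qg imset_f.
Qed.

Lemma occ_subst_const_bounds pi (k := size pi) :
  occ pi B * a ^ k <= occ pi C /\
  occ pi C + 'C(b, k) * a ^ k <= occ pi B * a ^ k + 'C(b * a, k).
Proof.
rewrite (@occE (b * a) pi C) ?size_subst_const //.
set S := [set I | _]; set D := [set I : {set 'I_(b * a)} | #|I| == k].
have card_SI : #|S :&: sel_sets| = occ pi B * a ^ k.
  rewrite (card_sel_sets _ (fun J => order_iso (mask_set J B) pi) k) ?(@occE b) //.
    by move=> g; rewrite order_iso_sel_set.
  by move=> J /order_iso_size; rewrite size_mask_set.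
have card_DI : #|D :&: sel_sets| = 'C(b, k) * a ^ k.
  rewrite (card_sel_sets _ (fun J => #|J| == k) k) ?card_draws ?card_ord //.
    by move=> g; rewrite card_sel_set.
  by move=> J /eqP.
have card_D : #|D :&: sel_sets| + #|D :\: sel_sets| = 'C(b * a, k).
  by rewrite cardsID card_draws card_ord.
have SD : #|S :\: sel_sets| <= #|D :\: sel_sets|.
  apply/subset_leq_card/setSD/subsetP => I; rewrite !inE => /order_iso_size.
  by rewrite size_mask_set ?size_subst_const // => ->.
rewrite -(cardsID sel_sets S) card_SI; split; first exact: leq_addr.
lia.
Qed.

End OccSubstConst.

(* Among the k-sets of positions in b blocks of size a, those meeting every block at
   most once form a proportion at least ((b - k)/b)^k. *)
Lemma binomial_ratio a b k :
  'C(b * a, k) * (b - k) ^ k <= a ^ k * 'C(b, k) * b ^ k.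
Proof.
rewrite -(leq_pmul2r (fact_gt0 k)).
have ffact_ratio j : j <= k -> (b * a) ^_ j * (b - k) ^ j <= a ^ j * b ^_ j * b ^ j.
  elim: j => [|j IH] j_le; first by rewrite !ffactn0 !expn0.
  rewrite !ffactnSr !expnS.
  have step : (b * a - j) * (b - k) <= a * (b - j) * b.
    apply: (@leq_trans ((b * a) * (b - j))); first by apply: leq_mul; [exact: leq_subr|lia].
    by apply: eq_leq; nia.
  apply: (leq_trans _ (leq_trans (leq_mul (IH (ltnW j_le)) step) _)); apply: eq_leq; nia.
have := ffact_ratio k (leqnn k); rewrite -!bin_ffact => H.
by apply: (leq_trans _ (leq_trans H _)); apply: eq_leq; nia.
Qed.

(** * Densities and limits *)

Local Open Scope R_scope.

Lemma INR_expn m n : INR (m ^ n)%N = INR m ^ n.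
Proof. by elim: n => [|n IH]; rewrite ?expn0 // expnS mult_INR IH. Qed.

Lemma INR_le {m n} : (m <= n)%N -> INR m <= INR n.
Proof. by move/leP; apply: le_INR. Qed.

Lemma INR_gt0 {n} : (0 < n)%N -> 0 < INR n.
Proof. by move/ltP; apply: lt_0_INR. Qed.

Lemma bernoulli_ineq (h : R) n : -1 <= h -> 1 + INR n * h <= (1 + h) ^ n.
Proof.
move=> h_ge; elim: n => [|n IH]; first by rewrite /=; lra.
rewrite S_INR /=.
have := pos_INR n; have : 0 <= (1 + h) ^ n by apply: pow_le; lra.
nra.
Qed.

Lemma cocc_density_gap (x y a b k : R) : 0 < a -> 1 <= b -> 0 <= k ->
  x <= b * (y + k) -> b * y <= x + b ->
  Rabs (x / (b * a) - y / a) <= (k + 1) / a.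
Proof.
move=> a_gt0 b_ge1 k_ge0 hi lo.
have ia_gt0 : 0 < / a by apply: Rinv_0_lt_compat.
have ib_gt0 : 0 < / b by apply: Rinv_0_lt_compat; lra.
have -> : x / (b * a) - y / a = (x * / b - y) * / a by field; lra.
have t_lo : -1 <= x * / b - y.
  have := Rmult_le_compat_r (/ b) _ _ (Rlt_le _ _ ib_gt0) lo.
  have -> : b * y * / b = y by field; lra.
  have -> : (x + b) * / b = x * / b + 1 by field; lra.
  lra.
have t_hi : x * / b - y <= k.
  have := Rmult_le_compat_r (/ b) _ _ (Rlt_le _ _ ib_gt0) hi.
  have -> : b * (y + k) * / b = y + k by field; lra.
  lra.
apply: Rabs_le; rewrite /Rdiv; split; nra.
Qed.

Lemma occ_density_gap (x y c1 c2 p : R) : 0 < c1 -> 0 < c2 -> 0 <= x <= c1 -> 0 <= p ->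
  x * p <= y -> y + c1 * p <= x * p + c2 ->
  Rabs (y / c2 - x / c1) <= 1 - c1 * p / c2.
Proof.
move=> c1_gt0 c2_gt0 x_bnd p_ge0 lo hi.
have ic1_gt0 : 0 < / c1 by apply: Rinv_0_lt_compat.
have ic2_gt0 : 0 < / c2 by apply: Rinv_0_lt_compat.
pose r := x / c1; pose rho := c1 * p / c2; pose e := (y - x * p) / c2.
have r_bnd : 0 <= r <= 1.
  split; first by apply: Rmult_le_pos; lra.
  have -> : 1 = c1 / c1 by field; lra.
  by apply: Rmult_le_compat_r; lra.
have e_ge0 : 0 <= e by apply: Rmult_le_pos; lra.
have rho_ge0 : 0 <= rho by apply: Rmult_le_pos; [nra|lra].
have e_rho : e + rho <= 1.
  have -> : e + rho = (y - x * p + c1 * p) / c2 by rewrite /e /rho; field; lra.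
  have -> : 1 = c2 / c2 by field; lra.
  by apply: Rmult_le_compat_r; lra.
have -> : y / c2 - x / c1 = r * rho + e - r by rewrite /r /rho /e; field; lra.
rewrite -/rho; apply: Rabs_le; nra.
Qed.

Lemma bernoulli_ratio (c1 c2 p b : R) k : 0 < b -> INR k <= b -> 0 < c2 ->
  c2 * (b - INR k) ^ k <= p * c1 * b ^ k ->
  1 - c1 * p / c2 <= INR k * INR k / b.
Proof.
move=> b_gt0 k_le c2_gt0 ratio.
have bk_gt0 : 0 < b ^ k by apply: pow_lt.
have pow_eq : (1 + - (INR k / b)) ^ k * b ^ k = (b - INR k) ^ k.
  by rewrite -Rpow_mult_distr; congr pow; field; lra.
have lower : (1 + - (INR k / b)) ^ k <= c1 * p / c2.
  apply: (Rmult_le_reg_r (c2 * b ^ k)); first exact: Rmult_lt_0_compat.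
  have -> : c1 * p / c2 * (c2 * b ^ k) = p * c1 * b ^ k by field; lra.
  by rewrite -Rmult_assoc (Rmult_comm _ c2) Rmult_assoc pow_eq.
have kb_le : INR k / b <= 1.
  have -> : 1 = b / b by field; lra.
  by apply: Rmult_le_compat_r; [apply: Rlt_le; apply: Rinv_0_lt_compat|].
have bern : 1 + INR k * - (INR k / b) <= (1 + - (INR k / b)) ^ k.
  by apply: bernoulli_ineq; lra.
have -> : INR k * INR k / b = INR k * (INR k / b) by field; lra.
lra.
Qed.

Lemma cocc_t_subst_const A B pi : is_perm B -> (0 < size A)%N -> (0 < size B)%N ->
  (size pi <= size A)%N ->
  Rabs (cocc_t pi (subst_const B A) - cocc_t pi A) <= (INR (size pi) + 1) / INR (size A).
Proof.
move=> permB a_gt0 b_gt0 k_le; rewrite /cocc_t size_subst_const.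
rewrite ltnNge (leq_trans k_le (leq_pmull _ b_gt0)) ltnNge k_le /= mult_INR.
have [/INR_le hi /INR_le lo] := cocc_subst_const_bounds A B pi permB b_gt0.
rewrite !mult_INR !plus_INR in hi lo.
apply: cocc_density_gap => //; first exact: INR_gt0.
  by have := INR_le b_gt0; rewrite /=; lra.
exact: pos_INR.
Qed.

Lemma occ_t_subst_const A B pi : is_perm A -> is_perm B ->
  (0 < size A)%N -> (0 < size B)%N -> (size pi <= size B)%N ->
  Rabs (occ_t pi (subst_const B A) - occ_t pi B) <=
    INR (size pi) * INR (size pi) / INR (size B).
Proof.
move=> permA permB a_gt0 b_gt0 k_le; rewrite /occ_t size_subst_const.
rewrite ltnNge (leq_trans k_le (leq_pmulr _ a_gt0)) ltnNge k_le /=.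
have [/INR_le lo /INR_le hi] := occ_subst_const_bounds _ _ permA permB a_gt0 pi.
rewrite !plus_INR !mult_INR in lo hi.
have c2_gt0 : (0 < 'C(size B * size A, size pi))%N.
  by rewrite bin_gt0 (leq_trans k_le (leq_pmulr _ a_gt0)).
apply: (Rle_trans _ (1 - INR 'C(size B, size pi) * INR (size A ^ size pi)
                           / INR 'C(size B * size A, size pi))).
  apply: occ_density_gap => //.
  - by apply: INR_gt0; rewrite bin_gt0.
  - exact: INR_gt0.
  - by split; [exact: pos_INR | apply: INR_le; exact: occ_le_binomial].
  - exact: pos_INR.
apply: bernoulli_ratio; [exact: INR_gt0 | exact: INR_le | exact: INR_gt0 |].
have := INR_le (binomial_ratio (size A) (size B) (size pi)).
by rewrite !mult_INR !INR_expn minus_INR //; apply/leP.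
Qed.

Lemma Un_cv_close {u w d : nat -> R} {v : R} : Un_cv u v -> Un_cv d 0 ->
  (exists N, forall m, (N <= m)%coq_nat -> Rabs (w m - u m) <= d m) -> Un_cv w v.
Proof.
move=> cv_u cv_d [N0 close] eps eps_gt0.
have [N1 near_u] := cv_u _ (ltac:(lra) : eps / 2 > 0).
have [N2 near_d] := cv_d _ (ltac:(lra) : eps / 2 > 0).
exists (N0 + N1 + N2)%coq_nat => m m_ge; rewrite /R_dist.
have := close m ltac:(lia); have := near_u m ltac:(lia); have := near_d m ltac:(lia).
rewrite /R_dist Rminus_0_r => dm um wm.
have := Rabs_triang (w m - u m) (u m - v); have := Rle_abs (d m).
have -> : w m - u m + (u m - v) = w m - v by ring.
lra.
Qed.

Lemma Un_cv_div_size {s : nat -> seq nat} (K : R) :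
  size_to_infty s -> Un_cv (fun m => K / INR (size (s m))) 0.
Proof.
move=> s_infty eps eps_gt0.
have [M M_big] := INR_archimed eps (Rabs K) eps_gt0.
have [N N_big] := s_infty M.+1.
exists N => m m_ge; rewrite /R_dist Rminus_0_r.
have size_ge : INR M.+1 <= INR (size (s m)) by apply: INR_le; exact: N_big.
have size_gt0 : 0 < INR (size (s m)) by rewrite S_INR in size_ge; have := pos_INR M; lra.
have is_gt0 : 0 < / INR (size (s m)) by apply: Rinv_0_lt_compat.
have s_is : INR (size (s m)) * / INR (size (s m)) = 1 by apply: Rinv_r; lra.
rewrite /Rdiv Rabs_mult (Rabs_right (/ _)); last by lra.
have : Rabs K < eps * INR (size (s m)) by rewrite S_INR in size_ge; nra.
nra.
Qed.

Lemma size_to_infty_both {sA sB : nat -> seq nat} MA MB :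
  size_to_infty sA -> size_to_infty sB ->
  exists N, forall m, (N <= m)%coq_nat -> (MA <= size (sA m))%N /\ (MB <= size (sB m))%N.
Proof.
move=> infA infB; have [NA bigA] := infA MA; have [NB bigB] := infB MB.
by exists (NA + NB)%coq_nat => m m_ge; split; [apply: bigA | apply: bigB]; lia.
Qed.

Section SubstConstSequence.
Variables sA sB : nat -> seq nat.
Hypotheses (infA : size_to_infty sA) (infB : size_to_infty sB).
Let sC m := subst_const (sB m) (sA m).

Lemma size_to_infty_subst_const : size_to_infty sC.
Proof.
move=> M; have [N big] := size_to_infty_both 1%N M infA infB.
exists N => m /big[a_ge b_ge]; rewrite /sC size_subst_const.
exact: leq_trans b_ge (leq_pmulr _ a_ge).
Qed.

Lemma cocc_cv_subst_const PA vA : perm_seq sB -> cocc_cv PA sA vA -> cocc_cv PA sC vA.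
Proof.
move=> permB cvA pi pi_in.
apply: (Un_cv_close (cvA pi pi_in) (Un_cv_div_size (INR (size pi) + 1) infA)).
have [N big] := size_to_infty_both (size pi).+1 1%N infA infB.
exists N => m /big[a_ge b_ge]; apply: cocc_t_subst_const => //.
- exact: leq_trans a_ge.
- exact: ltnW.
Qed.

Lemma occ_cv_subst_const PB vB : perm_seq sA -> perm_seq sB -> occ_cv PB sB vB ->
  occ_cv PB sC vB.
Proof.
move=> permA permB cvB pi pi_in.
apply: (Un_cv_close (cvB pi pi_in) (Un_cv_div_size (INR (size pi) * INR (size pi)) infB)).
have [N big] := size_to_infty_both 1%N (size pi).+1 infA infB.
exists N => m /big[a_ge b_ge]; apply: occ_t_subst_const => //.
- exact: leq_trans b_ge.
- exact: ltnW.
Qed.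

End SubstConstSequence.

Theorem mainTheorem14 (PA PB : seq (seq nat)) :
  all is_perm PA -> all is_perm PB ->
  (* A x B = C *)
  (forall vA vB : seq nat -> R, (limsetA PA vA /\ limsetB PB vB) <-> limsetC PA PB vA vB) /\
  (* the explicit construction *)
  (forall (vA vB : seq nat -> R) (sA sB : nat -> seq nat),
     limsetA PA vA -> limsetB PB vB ->
     perm_seq sA -> size_to_infty sA -> cocc_cv PA sA vA ->
     perm_seq sB -> size_to_infty sB -> occ_cv PB sB vB ->
     let sC := fun m => subst_const (sB m) (sA m) in
     size_to_infty sC /\ cocc_cv PA sC vA /\ occ_cv PB sC vB).
Proof.
move=> _ _; split=> [vA vB|vA vB sA sB _ _ pA iA cA pB iB oB sC]; last first.
  split; first exact: size_to_infty_subst_const.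
  by split; [apply: cocc_cv_subst_const | apply: occ_cv_subst_const].
split=> [[[uA [sA [pA [iA cA]]]] [uB [sB [pB [iB oB]]]]] | [uA [uB [s [p [i [c o]]]]]]].
  do 2 split=> //; exists (fun m => subst_const (sB m) (sA m)); split.
    by move=> m; apply: is_perm_subst_const.
  split; first exact: size_to_infty_subst_const.
  by split; [apply: cocc_cv_subst_const | apply: occ_cv_subst_const].
by split; split=> //; exists s.
Qed.
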